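(* Let $B$ be a metric space and $f:B\to B$ a continuous map such that $(B,f)$ is minimal. Then there exists an irrational rotation $g$ of the circle $\mathbb S^1$ such that the direct product system $(B\times\mathbb S^1,f\times g)$ is minimal.
   Context: A dynamical system $(X,f)$ with $f$ continuous is minimal if the forward orbit $\{x,f(x),f^2(x),\dots\}$ of every point $x\in X$ is dense in $X$. $(f\times g)(x,s)=(f(x),g(s))$. *)

From HB Require Import structures.
From mathcomp Require Import all_boot all_order all_algebra.
From mathcomp Require Import all_classical all_reals all_analysis.
From mathcomp Require Import subtype_topology.
Set Implicit Arguments. Unset Strict Implicit. Unset Printing Implicit Defensive.
Import Order.TTheory GRing.Theory Num.Theory.
Import numFieldNormedType.Exports.
Local Open Scope classical_set_scope.
Local Open Scope ring_scope.

Definition forward_orbit (X : Type) (f : X -> X) (x : X) : set X :=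
  [set y | exists n : nat, y = iter n f x].

Definition minimal (X : topologicalType) (f : X -> X) : Prop :=
  continuous f /\ forall x : X, dense (forward_orbit f x).

Definition circle_set (R : realType) : set (R * R) :=
  [set p | p.1 ^+ 2 + p.2 ^+ 2 = 1].
Notation circle R := (set_type (@circle_set R)).

Definition irrational (R : realType) (a : R) : Prop :=
  forall q : rat, a <> ratr q.

Definition rot2 (R : realType) (a : R) (p : R * R) : R * R :=
  let t := 2 * pi * a in
  (p.1 * cos t - p.2 * sin t, p.1 * sin t + p.2 * cos t).

Definition irrational_rotation (R : realType) (g : circle R -> circle R) : Prop :=
  exists a : R, irrational a /\ forall z : circle R, set_val (g z) = rot2 a (set_val z).

Definition prod_map (X Y : Type) (f : X -> X) (g : Y -> Y) (p : X * Y) : X * Y :=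
  (f p.1, g p.2).

(* Fix x0 in B. A nested-interval construction yields a rotation number al such
   that for every e > 0 there is c > 0 for which x0 has arbitrarily close
   returns f^n x0 with n al in [c, e] modulo 1; such an al is irrational.
   Chaining these returns, with the continuity of the iterates keeping the
   orbit near x0, realises any rotation up to e while coming back near x0,
   uniformly for starting points near x0.  Since every f-orbit passes near x0
   and the orbit of x0 passes near every point, every orbit of f x R_al comes
   near every point of B x S^1. *)

From Pilot Require Import Defs.
From HB Require Import structures.
From mathcomp Require Import all_boot all_order all_algebra.
From mathcomp Require Import all_classical all_reals all_analysis.
From mathcomp Require Import subtype_topology.
From mathcomp Require Import ring lra.
Import Order.TTheory GRing.Theory Num.Theory.
Import numFieldNormedType.Exports.
Local Open Scope classical_set_scope.
Local Open Scope ring_scope.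
Set Implicit Arguments. Unset Strict Implicit. Unset Printing Implicit Defensive.

Lemma continuous_pair (T U V : topologicalType) (f : T -> U) (g : T -> V) :
  continuous f -> continuous g -> continuous (fun x => (f x, g x)).
Proof. by move=> cf cg t; apply: cvg_pair; [exact: cf | exact: cg]. Qed.

Section Circle.
Variable R : realType.

Definition circle_point (t : R) : R * R := (cos (2 * pi * t), sin (2 * pi * t)).

Lemma circle_point_in (t : R) : circle_point t \in @circle_set R.
Proof. by rewrite inE /circle_set /= cos2Dsin2. Qed.

Definition circle_at (t : R) : circle R := exist _ (circle_point t) (circle_point_in t).

Lemma circle_atDn (t : R) (n : nat) : circle_at (t + n%:R) = circle_at t.
Proof.
apply: val_inj => /=; rewrite /circle_point.
have -> : 2 * pi * (t + n%:R) = 2 * pi * t + (pi *+ 2) *+ n by rewrite -mulr_natr; ring.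
by rewrite (periodicn (@cosD2pi R)) (periodicn (@sinD2pi R)).
Qed.

Lemma circle_atDz (t : R) (k : int) : circle_at (t + k%:~R) = circle_at t.
Proof.
case: k => n; first exact: circle_atDn.
rewrite -(circle_atDn _ n.+1) NegzE intrN -pmulrn; congr circle_at; ring.
Qed.

Lemma circle_at_surj (w : circle R) : exists t, circle_at t = w.
Proof.
case: w => -[x y] /[dup] + w_in; rewrite inE /circle_set /= => xy1.
have x_in : -1 <= x <= 1 by apply/andP; split; nra.
have sin_acos_x : sin (acos x) = `|y|.
  by rewrite sin_acos // -sqrtr_sqr; congr Num.sqrt; lra.
have pi2_neq0 : 2 * pi != 0 :> R by rewrite mulf_neq0 // gt_eqF ?pi_gt0.
pose u := if 0 <= y then acos x else - acos x.
exists (u / (2 * pi)); apply: val_inj; rewrite /= /circle_point mulrCA mulfV // mulr1.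
rewrite /u; case: ifP => [y0|/negbT]; rewrite ?cosN ?sinN acosK ?inE // sin_acos_x.
  by rewrite ger0_norm.
by rewrite -ltNge => y0; rewrite ltr0_norm // opprK.
Qed.

Lemma continuous_circle_at : continuous circle_at.
Proof.
have continuous_turn (g : R -> R) : continuous g -> continuous (fun t => g (2 * pi * t)).
  move=> g_cont t; have mul_cont : {for t, continuous ( *%R (2 * pi : R))}.
    exact: mulrl_continuous.
  exact: (continuous_comp mul_cont (g_cont _)).
apply: continuous_comp_initial; apply: continuous_pair; apply: continuous_turn.
- exact: continuous_cos.
- exact: continuous_sin.
Qed.

Lemma rot2_circle_point (a t : R) : rot2 a (circle_point t) = circle_point (t + a).
Proof.
rewrite /rot2 /circle_point; set T := 2 * pi.
by rewrite mulrDr cosD sinD; congr (_, _) => /=; ring.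
Qed.

Lemma rot2_in (a : R) (z : circle R) : rot2 a (set_val z) \in @circle_set R.
Proof.
case: z => -[x y] xy_in; have xy1 : x ^+ 2 + y ^+ 2 = 1 by move: xy_in; rewrite inE.
rewrite set_valE inE /circle_set /rot2 /=; set T := 2 * pi.
rewrite -[RHS](mulr1 1) -{1}xy1 -(cos2Dsin2 (T * a)); ring.
Qed.

Definition rotation (a : R) (z : circle R) : circle R :=
  exist _ (rot2 a (set_val z)) (rot2_in a z).

Lemma rotation_circle_at (a t : R) : rotation a (circle_at t) = circle_at (t + a).
Proof. exact/val_inj/rot2_circle_point. Qed.

Lemma continuous_rotation (a : R) : continuous (rotation a).
Proof.
have rot2_cont : continuous (@rot2 R a).
  rewrite /rot2; apply: continuous_pair => p.
  - by apply: cvgB; apply: cvgMr_tmp; [exact: cvg_fst | exact: cvg_snd].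
  - by apply: cvgD; apply: cvgMr_tmp; [exact: cvg_fst | exact: cvg_snd].
apply: continuous_comp_initial => z.
exact: (continuous_comp (@initial_continuous _ _ (@set_val _ (@circle_set R)) z) (rot2_cont _)).
Qed.

End Circle.

Lemma nested_intervals_meet (R : realType) (a b : nat -> R) :
  (forall j, a j <= b j) -> (forall j, a j <= a j.+1) -> (forall j, b j.+1 <= b j) ->
  exists x, forall j, a j <= x <= b j.
Proof.
move=> ab a_incr b_decr.
have a_homo := homo_leq (@lexx _ R) (fun y x z => @le_trans _ R y x z) a_incr.
have b_homo := homo_leq (r := fun x y => y <= x) (@lexx _ R)
  (fun y x z xy yz => le_trans yz xy) b_decr.
have a_le_b i j : a i <= b j.
  apply: le_trans (a_homo _ _ (leq_maxl i j)) _.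
  exact: le_trans (ab _) (b_homo _ _ (leq_maxr i j)).
have a_sup : has_sup (range a) by split; [exists (a 0%N), 0%N | exists (b 0%N) => _ [i _ <-]].
exists (sup (range a)) => j; apply/andP; split.
- by apply: sup_upper_bound => //; exists j.
- by apply: ge_sup; [exists (a 0%N), 0%N | move=> _ [i _ <-]].
Qed.

Section Mod1.
Variable R : realType.

Definition mod1_in (y lo hi : R) := exists z : int, lo <= y - z%:~R <= hi.

Lemma exists_invS_le (e : R) : 0 < e -> exists k : nat, k.+1%:R^-1 <= e.
Proof.
move=> e0; exists (Num.truncn e^-1).
by rewrite -[X in _ <= X]invrK lef_pV2 ?posrE ?invr_gt0 ?ltr0n //; exact/ltW/truncnS_gt.
Qed.

Lemma invS_le (j k : nat) : (k <= j)%N -> j.+1%:R^-1 <= k.+1%:R^-1 :> R.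
Proof. by move=> kj; rewrite lef_pV2 ?posrE ?ltr0n // ler_nat ltnS. Qed.

Lemma mod1_window_subinterval (a b u v : R) (r : nat) :
  a < b -> 0 <= u -> u < v -> v <= 1 -> 2 <= r%:R * (b - a) ->
  exists a' b', [/\ a <= a', a' < b', b' <= b &
    forall x, a' <= x <= b' -> mod1_in (r%:R * x) u v].
Proof.
move=> ab u0 uv v1 r_large.
have r0 : 0 < r%:R :> R.
  by rewrite ltr0n lt0n; apply: contraTneq r_large => ->; rewrite mul0r; lra.
set k := Num.ceil (r%:R * a).
have /andP[k_lt k_ge] := ceil_itv (r%:R * a); rewrite intrD in k_lt.
exists ((k%:~R + u) / r%:R), ((k%:~R + v) / r%:R); split.
- by rewrite ler_pdivlMr // mulrC; lra.
- by rewrite ltr_pM2r ?invr_gt0 //; lra.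
- by rewrite ler_pdivrMr // mulrC; move: r_large; rewrite mulrBr; lra.
move=> x /andP[x_ge x_le]; exists k; apply/andP; split.
- by move: x_ge; rewrite ler_pdivrMr // mulrC; lra.
- by move: x_le; rewrite ler_pdivlMr // mulrC; lra.
Qed.

Section RotationNumber.
Variable P : R -> nat -> Prop.
Hypothesis P_unbounded : forall d, 0 < d -> forall N, exists2 n, (N <= n)%N & P d n.
Hypothesis P_mono : forall d d' n, d <= d' -> P d n -> P d' n.

Definition mod1_windows (d : R) (m : nat) (a b : R) :=
  forall k, (k < m)%N -> exists2 n, P d n &
    forall x, a <= x <= b -> mod1_in (n%:R * x) (k.+1%:R^-1 / 2) k.+1%:R^-1.

Lemma mod1_windows_subinterval d m a b : 0 < d -> a < b ->
  exists a' b', [/\ a <= a', a' < b', b' <= b & mod1_windows d m a' b'].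
Proof.
move=> d0 ab; elim: m => [|m [a1 [b1 [aa1 ab1 bb1 win1]]]].
  by exists a, b; split.
have [n n_large Pn] := P_unbounded d0 (Num.truncn (2 / (b1 - a1))).+1.
have n_window : 2 <= n%:R * (b1 - a1).
  rewrite -ler_pdivrMr ?subr_gt0 //; apply/ltW/(lt_le_trans (truncnS_gt _)).
  by rewrite ler_nat.
have w0 : 0 < m.+1%:R^-1 :> R by rewrite invr_gt0 ltr0n.
have w1 : m.+1%:R^-1 <= 1 :> R by rewrite invf_le1 ?ler1n ?ltr0n.
have [a2 [b2 [aa2 ab2 bb2 win2]]] :
    exists a2 b2, [/\ a1 <= a2, a2 < b2, b2 <= b1 & forall x, a2 <= x <= b2 ->
      mod1_in (n%:R * x) (m.+1%:R^-1 / 2) m.+1%:R^-1].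
  apply: mod1_window_subinterval => //.
  by rewrite ltr_pdivrMr ?ltr0n // ltr_pMr // ltr1n.
exists a2, b2; split; [exact: le_trans aa1 aa2 | done | exact: le_trans bb2 bb1 |].
move=> k; rewrite ltnS leq_eqVlt => /orP[/eqP -> | km]; first by exists n.
have [n' Pn' win'] := win1 k km; exists n' => // x /andP[x_ge x_le].
by apply: win'; rewrite (le_trans aa2 x_ge) (le_trans x_le bb2).
Qed.

Definition mod1_returns (al : R) := forall e, 0 < e -> exists2 c, 0 < c &
  forall d, 0 < d -> exists2 n, P d n & mod1_in (n%:R * al) c e.

Lemma exists_mod1_returns : exists al, mod1_returns al.
Proof.
have step j (p : R * R) : {q : R * R | p.1 < p.2 ->
    [/\ p.1 <= q.1, q.1 < q.2, q.2 <= p.2 & mod1_windows j.+1%:R^-1 j.+1 q.1 q.2]}.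
  apply: cid; have [p12|p21] := ltP p.1 p.2; last by exists p; rewrite ltNge p21.
  have jS0 : 0 < j.+1%:R^-1 :> R by rewrite invr_gt0 ltr0n.
  have [a' [b' [? ? ? ?]]] := mod1_windows_subinterval j.+1 jS0 p12.
  by exists (a', b').
pose I := fix I j := if j is i.+1 then sval (step i (I i)) else ((0 : R), (1 : R)).
have I_lt j : (I j).1 < (I j).2.
  by elim: j => [|j IH]; [exact: ltr01 | have [] := svalP (step j (I j)) IH].
have I_step j := svalP (step j (I j)) (I_lt j).
have [al al_in] := @nested_intervals_meet R (fun j => (I j).1) (fun j => (I j).2)
  (fun j => ltW (I_lt j)) (fun j => let: And4 h _ _ _ := I_step j in h)
  (fun j => let: And4 _ _ h _ := I_step j in h).
exists al => e e0; have [k ke] := exists_invS_le e0.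
exists (k.+1%:R^-1 / 2); first by rewrite divr_gt0 ?invr_gt0 ?ltr0n.
move=> d d0; have [i id] := exists_invS_le d0.
have [_ _ _ /(_ k (leq_maxl k i))] := I_step (maxn k i).
case=> n Pn n_win; exists n.
  by apply: P_mono Pn; exact: le_trans (invS_le (leq_maxr k i)) id.
have [z /andP[z_ge z_le]] := n_win al (al_in (maxn k i).+1).
by exists z; rewrite z_ge (le_trans z_le ke).
Qed.

End RotationNumber.

Lemma mod1_returns_irrational (P : R -> nat -> Prop) (al : R) :
  mod1_returns P al -> Defs.irrational al.
Proof.
move=> al_ret q al_q.
set D := denq q; set N := numq q.
have D0 : 0 < (D%:~R : R) by rewrite ltr0z denq_gt0.
have alD : al * D%:~R = N%:~R.
  by rewrite al_q -(ratr_int R D) -rmorphM /= -numqE ratr_int.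
have e0 : 0 < (2 * D%:~R)^-1 :> R by rewrite invr_gt0 mulr_gt0.
have [c c0 /(_ 1 ltr01) [n _ [z /andP[c_le le_e]]]] := al_ret _ e0.
set m : int := n%:Z * N - z * D.
have nD : (n%:R * al - z%:~R) * D%:~R = m%:~R.
  by rewrite /m intrD intrM mulrBl -mulrA alD intrN intrM.
have m_ge1 : (1 : R) <= m%:~R.
  have : (0 : R) < m%:~R by rewrite -nD mulr_gt0 //; lra.
  by rewrite ltr0z ler1z.
have : (n%:R * al - z%:~R) * D%:~R <= (2 * D%:~R)^-1 * D%:~R by rewrite ler_pM2r.
by rewrite nD invfM -mulrA mulVf ?gt_eqF // mulr1; lra.
Qed.

End Mod1.

Section Returns.
Variables (R : realType) (B : pseudoMetricType R) (f : B -> B).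
Hypothesis f_cont : continuous f.
Hypothesis f_dense : forall x, dense (forward_orbit f x).

Lemma continuous_iter n : continuous (iter n f).
Proof.
elim: n => [|n IH] x /=; first exact: cvg_id.
exact: (continuous_comp (IH x) (@f_cont _)).
Qed.

Lemma continuous_iter_ball n (x : B) (e : R) : 0 < e ->
  exists2 r, 0 < r & forall w, ball x r w -> ball (iter n f x) e (iter n f w).
Proof.
move=> e0; have /nbhs_ballP[r r0 rP] := @continuous_iter n x _ (nbhsx_ballx _ _ e0).
by exists r.
Qed.

Lemma dense_orbit_meets (x y : B) (A : set B) :
  dense (forward_orbit f y) -> nbhs x A -> exists n, A (iter n f y).
Proof.
move=> y_dense xA.
have [p [/interior_subset Ap [n pE]]] := y_dense A° (ex_intro _ x xA) (@open_interior _ A).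
by exists n; rewrite -pE.
Qed.

Definition return_time (x0 : B) (d : R) (n : nat) := ball x0 d (iter n f x0).

Lemma return_time_unbounded (x0 : B) (d : R) : 0 < d ->
  forall N, exists2 n, (N <= n)%N & return_time x0 d n.
Proof.
move=> d0 N; have [m m_ret] := dense_orbit_meets (f_dense (iter N f x0)) (nbhsx_ballx x0 _ d0).
by exists (m + N)%N; [rewrite leq_addl | rewrite /return_time iterD].
Qed.

Variables (x0 : B) (al : R).

Lemma return_time_mono d d' n : d <= d' -> return_time x0 d n -> return_time x0 d' n.
Proof. by move=> /le_ball; apply. Qed.

Lemma returns_with_shift_upto (e c : R) (m : nat) (s d : R) : 0 < c ->
  (forall d, 0 < d -> exists2 n, return_time x0 d n & mod1_in (n%:R * al) c e) ->
  0 <= s <= m%:R * c -> 0 < d ->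
  exists2 n, return_time x0 d n & mod1_in (n%:R * al - s) (- e) e.
Proof.
move=> c0 c_ret; have ce : c <= e.
  by have [n _ [z /andP[c_le le_e]]] := c_ret 1 ltr01; exact: le_trans c_le le_e.
elim: m s d => [|m IH] s d /andP[s0 sm] d0.
all: have [se|es] := leP s e;
  [by exists 0%N; [exact: ballxx | exists 0; rewrite mul0r; lra] |].
  by move: sm; rewrite mul0r; lra.
have d20 : 0 < d / 2 by lra.
have [n2 ret2 [z2 /andP[t_ge t_le]]] := c_ret _ d20.
have [r r0 n2_cont] := continuous_iter_ball n2 x0 d20.
have s_rest : 0 <= s - (n2%:R * al - z2%:~R) <= m%:R * c.
  by move: sm; rewrite -natr1 mulrDl mul1r => sm; apply/andP; split; lra.
have [n1 ret1 [z1 /andP[u_ge u_le]]] := IH _ r s_rest r0.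
exists (n2 + n1)%N.
  by rewrite /return_time iterD (splitr d); exact: ball_triangle ret2 (n2_cont _ ret1).
exists (z1 + z2); rewrite natrD intrD; apply/andP; split; lra.
Qed.

Hypothesis x0_returns : mod1_returns (return_time x0) al.

Lemma returns_with_shift (e s d : R) : 0 < e -> 0 < d ->
  exists2 n, return_time x0 d n & mod1_in (n%:R * al - s) (- e) e.
Proof.
move=> e0 d0; have [c c0 c_ret] := x0_returns e0.
have frac_ge0 : 0 <= s - (Num.floor s)%:~R by rewrite subr_ge0 floor_le.
have frac_le : s - (Num.floor s)%:~R <= (Num.truncn ((s - (Num.floor s)%:~R) / c)).+1%:R * c.
  by rewrite -ler_pdivrMr //; exact/ltW/truncnS_gt.
have [n ret [z /andP[z_ge z_le]]] :=
  returns_with_shift_upto c0 c_ret (introT andP (conj frac_ge0 frac_le)) d0.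
by exists n => //; exists (z - Num.floor s); rewrite intrB; apply/andP; split; lra.
Qed.

(* The return times are taken on a finite grid of shifts [i e / 2] and then
   transported to all nearby points by continuity of the finitely many maps
   [iter n f]; this is what makes the shift available uniformly near [x0]. *)
Lemma near_returns_any_shift (e r : R) : 0 < e -> 0 < r ->
  \forall w \near x0, forall s,
    exists2 n, ball x0 r (iter n f w) & mod1_in (n%:R * al - s) (- e) e.
Proof.
move=> e0 r0; have e20 : 0 < e / 2 by lra.
have r20 : 0 < r / 2 by rewrite divr_gt0.
pose M := (Num.truncn (e / 2)^-1).+1.
have grid : \forall w \near x0, forall i : 'I_M, exists2 n, ball x0 r (iter n f w) &
    mod1_in (n%:R * al - i%:R * (e / 2)) (- (e / 2)) (e / 2).
  apply: filter_forall => i.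
  have [n ret shift] := returns_with_shift (i%:R * (e / 2)) e20 r20.
  have [r' r'0 n_cont] := continuous_iter_ball n x0 r20.
  apply/nbhs_ballP; exists r' => // w /n_cont w_close; exists n => //.
  by rewrite (splitr r); exact: ball_triangle ret w_close.
apply: filterS grid => w grid_w s.
have /andP[fl_le fl_gt] := floor_itv s; rewrite intrD in fl_gt.
pose i := Num.truncn ((s - (Num.floor s)%:~R) / (e / 2)).
have i_le : i%:R * (e / 2) <= s - (Num.floor s)%:~R.
  by rewrite -ler_pdivlMr // truncn_le; apply: divr_ge0; lra.
have i_gt : s - (Num.floor s)%:~R < i.+1%:R * (e / 2).
  by rewrite -ltr_pdivrMr //; exact: truncnS_gt.
have i_lt : (i < M)%N.
  rewrite -(ltr_nat R) (le_lt_trans _ (truncnS_gt (e / 2)^-1)) //.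
  by rewrite -div1r ler_pdivlMr //; lra.
have [n ret [z /andP[z_ge z_le]]] := grid_w (Ordinal i_lt).
exists n => //; exists (z - Num.floor s); move: i_gt; rewrite intrB -natr1 mulrDl mul1r.
by move=> i_gt; apply/andP; split; lra.
Qed.

Lemma orbit_hits_ball_with_angle (y b : B) (th0 th d e : R) : 0 < d -> 0 < e ->
  exists n, ball b d (iter n f y) /\ mod1_in (th0 + n%:R * al - th) (- e) e.
Proof.
move=> d0 e0; have d20 : 0 < d / 2 by lra.
have [n3 n3_b] := dense_orbit_meets (f_dense x0) (nbhsx_ballx b _ d20).
have [r3 r30 n3_cont] := continuous_iter_ball n3 x0 d20.
have [n1 n1_near] := dense_orbit_meets (f_dense y) (near_returns_any_shift e0 r30).
have [n2 n2_r3 [z /andP[z_ge z_le]]] := n1_near (th - th0 - (n3 + n1)%:R * al).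
exists (n3 + (n2 + n1))%N; split.
  by rewrite !iterD (splitr d); exact: ball_triangle n3_b (n3_cont _ n2_r3).
by exists z; move: z_ge z_le; rewrite !natrD !mulrDl => z_ge z_le; apply/andP; split; lra.
Qed.

Lemma iter_prod_rotation (y : B) (t : R) (n : nat) :
  iter n (prod_map f (rotation al)) (y, circle_at t) = (iter n f y, circle_at (t + n%:R * al)).
Proof.
elim: n => [|n IH]; first by rewrite /= mul0r addr0.
rewrite iterS IH /prod_map /= rotation_circle_at -natr1 mulrDl mul1r addrA //.
Qed.

Lemma continuous_prod_rotation : continuous (prod_map f (rotation al)).
Proof.
rewrite /prod_map; apply: continuous_pair => p.
- have fst_cont : {for p, continuous fst} by exact: cvg_fst.
  exact: (continuous_comp fst_cont (@f_cont p.1)).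
- have snd_cont : {for p, continuous snd} by exact: cvg_snd.
  exact: (continuous_comp snd_cont (@continuous_rotation _ al p.2)).
Qed.

Lemma dense_prod_rotation_orbit (p : B * circle R) :
  dense (forward_orbit (prod_map f (rotation al)) p).
Proof.
case: p => y w0 O [[b w] Obw] O_open.
have [th0 <-] := circle_at_surj w0; have [th thE] := circle_at_surj w.
have lift_cont : continuous (fun q : B * R => (q.1, circle_at q.2)).
  apply: continuous_pair => q; first exact: cvg_fst.
  have snd_cont : {for q, continuous snd} by exact: cvg_snd.
  exact: (continuous_comp snd_cont (@continuous_circle_at R q.2)).
have /nbhs_ballP[r r0 rO] : nbhs (b, th) ((fun q : B * R => (q.1, circle_at q.2)) @^-1` O).
  by apply: lift_cont; apply: open_nbhs_nbhs; split; rewrite //= thE.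
have r20 : 0 < r / 2 by rewrite divr_gt0.
have [n [n_b [z /andP[z_ge z_le]]]] := orbit_hits_ball_with_angle y b th0 th r0 r20.
exists (iter n (prod_map f (rotation al)) (y, circle_at th0)); split; last by exists n.
rewrite iter_prod_rotation.
have -> : circle_at (th0 + n%:R * al) = circle_at (th0 + n%:R * al - z%:~R).
  by rewrite -intrN circle_atDz.
apply: (rO (iter n f y, _)); split; first exact: n_b.
have r0' : 0 < r := r0.
rewrite -ball_normE; change (`|th - (th0 + n%:R * al - z%:~R)| < r).
by rewrite ltr_norml; apply/andP; split; lra.
Qed.

End Returns.

Unset Implicit Arguments.

(* The argument works in any pseudometric space. *)
Theorem proposition1 (R : realType) (B : pseudoMetricType R)
  (B_metric : hausdorff_space B) (f : B -> B) :
  minimal f ->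
  exists g : circle R -> circle R,
    irrational_rotation g /\
    minimal (prod_map f g : B * circle R -> B * circle R).
Proof.
move=> [f_cont f_dense].
suff [al al_irr al_dense] : exists2 al : R, Defs.irrational al &
    forall p, dense (forward_orbit (prod_map f (rotation al)) p).
  exists (rotation al); split; first by exists al.
  by split; [exact: continuous_prod_rotation | exact: al_dense].
have [[x0 _] | B_empty] := pselect (exists x : B, True).
  have [al al_ret] := exists_mod1_returns (return_time_unbounded f_dense x0)
    (@return_time_mono _ _ f x0).
  exists al; first exact: mod1_returns_irrational al_ret.
  exact: (dense_prod_rotation_orbit f_cont f_dense al_ret).
(* B is empty: density is vacuous and any rotation number will do. *)
have [al al_ret] := @exists_mod1_returns R (fun _ _ => True)
  (fun _ _ N => ex_intro2 _ _ N (leqnn N) I) (fun _ _ _ _ t => t).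
exists al; first exact: mod1_returns_irrational al_ret.
by case=> y; case: B_empty; exists y.
Qed.
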